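(* Let $\Sigma$ be an infinite alphabet and let $\mathcal{F}$ be a finite automaton over $\Sigma$ (finitely many states and finitely many transitions, each labelled by a letter of $\Sigma$). Then there exists a GVA $\mathcal{A}$ over $\Sigma$ such that $L(\mathcal{A})=\Sigma^{\star}\setminus L(\mathcal{F})$. That is, the complement of a regular language over $\Sigma$ is GVA-recognizable.
   Context: Fix an infinite alphabet $\Sigma$. A guard over a set of variables $\mathcal{X}$ (disjoint from $\Sigma$) is built by the grammar $g ::= \mathit{true} \mid \alpha=\beta \mid \alpha\neq\beta \mid g\wedge g$ with $\alpha,\beta\in\Sigma\cup\mathcal{X}$. A GVA is a tuple $\mathcal{A}=\langle\Sigma,\mathcal{X},Q,Q_0,\delta,F,\kappa\rangle$ where $\mathcal{X}$ is a finite set of variables, $Q$ a finite set of states, $Q_0\subseteq Q$ the initial states, $F\subseteq Q$ the accepting states, $\delta$ a finite set of transitions $q\xrightarrow{\alpha,g}q'$ with $q,q'\in Q$, $\alpha\in\Sigma\cup\mathcal{X}\cup\{\varepsilon\}$ and $g$ a guard, and $\kappa:\mathcal{X}\to 2^{Q}$ the refreshing function ($\kappa(x)$ is the set of states in which $x$ is freed). A configuration is a pair $(\sigma,q)$ with $q\in Q$ and $\sigma$ a partial map $\mathcal{X}\to\Sigma$. There is a step $(\sigma,q)\xrightarrow{a}(\sigma',q')$, $a\in\Sigma\cup\{\varepsilon\}$, if there is a transition $q\xrightarrow{\alpha,g}q'$ and a map $\gamma$ from the variables occurring in $\alpha$ or $g$ that are not in $\mathrm{dom}(\sigma)$ to $\Sigma$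 such that, with $\rho=\sigma\uplus\gamma$ (extended to be the identity on letters), $\rho$ satisfies $g$, $a=\rho(\alpha)$ if $\alpha\neq\varepsilon$ and $a=\varepsilon$ if $\alpha=\varepsilon$, and $\sigma'$ is the restriction of $\rho$ to $\{x\in\mathrm{dom}(\rho) : q'\notin\kappa(x)\}$. A word $w\in\Sigma^{\star}$ is accepted if there is a sequence of steps from $(\emptyset,q_0)$ with $q_0\in Q_0$ to some $(\sigma,q_f)$ with $q_f\in F$ whose labels concatenate to $w$; $L(\mathcal{A})$ is the set of accepted words. *)

From mathcomp Require Import all_boot.
From Stdlib Require Import List.
Set Implicit Arguments. Unset Strict Implicit. Unset Printing Implicit Defensive.

Definition infinite_alphabet (Sigma : Type) : Prop :=
  forall l : list Sigma, exists a : Sigma, ~ List.In a l.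

Record NFA (Sigma : Type) (n : nat) := {
  nfa_init  : pred 'I_n;
  nfa_final : pred 'I_n;
  nfa_trans : list ('I_n * Sigma * 'I_n) }.

Inductive nfa_run (Sigma : Type) (n : nat) (F : NFA Sigma n) :
    'I_n -> list Sigma -> 'I_n -> Prop :=
| nfa_run_nil q : nfa_run F q nil q
| nfa_run_cons q a q1 w q2 :
    List.In (q, a, q1) (nfa_trans F) -> nfa_run F q1 w q2 -> nfa_run F q (a :: w) q2.

Definition nfa_lang (Sigma : Type) (n : nat) (F : NFA Sigma n) (w : list Sigma) : Prop :=
  exists q0 qf, nfa_init F q0 /\ nfa_run F q0 w qf /\ nfa_final F qf.

Inductive sym (Sigma X : Type) := SLet (a : Sigma) | SVar (x : X).

Inductive guard (Sigma X : Type) :=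
| GTrue
| GEq  (s t : sym Sigma X)
| GNeq (s t : sym Sigma X)
| GAnd (g1 g2 : guard Sigma X).

Definition sym_vars (Sigma X : Type) (s : sym Sigma X) : list X :=
  match s with SLet _ => nil | SVar x => x :: nil end.

Fixpoint guard_vars (Sigma X : Type) (g : guard Sigma X) : list X :=
  match g with
  | GTrue => nil
  | GEq s t => sym_vars s ++ sym_vars t
  | GNeq s t => sym_vars s ++ sym_vars t
  | GAnd g1 g2 => guard_vars g1 ++ guard_vars g2
  end.

Definition valuation (Sigma X : Type) := X -> option Sigma.

Definition sym_eval (Sigma X : Type) (rho : valuation Sigma X) (s : sym Sigma X)
  : option Sigma :=
  match s with SLet a => Some a | SVar x => rho x end.

Fixpoint sat (Sigma X : Type) (rho : valuation Sigma X) (g : guard Sigma X) : Prop :=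
  match g with
  | GTrue => True
  | GEq s t => exists v w, sym_eval rho s = Some v /\ sym_eval rho t = Some w /\ v = w
  | GNeq s t => exists v w, sym_eval rho s = Some v /\ sym_eval rho t = Some w /\ v <> w
  | GAnd g1 g2 => sat rho g1 /\ sat rho g2
  end.

(* A GVA with states Q = 'I_nQ and variables X = 'I_nX.
   Transitions q --(alpha,g)--> q' with alpha = None standing for epsilon.
   gva_kappa x q  means q \in kappa(x) (x is freed in q). *)
Record GVA (Sigma : Type) (nQ nX : nat) := {
  gva_init  : pred 'I_nQ;
  gva_final : pred 'I_nQ;
  gva_trans : list ('I_nQ * option (sym Sigma 'I_nX) * guard Sigma 'I_nX * 'I_nQ);
  gva_kappa : 'I_nX -> pred 'I_nQ }.

Definition alpha_vars (Sigma X : Type) (al : option (sym Sigma X)) : list X :=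
  match al with None => nil | Some s => sym_vars s end.

Definition gva_step (Sigma : Type) (nQ nX : nat) (A : GVA Sigma nQ nX)
  (sigma : valuation Sigma 'I_nX) (q : 'I_nQ) (a : option Sigma)
  (sigma' : valuation Sigma 'I_nX) (q' : 'I_nQ) : Prop :=
  exists (al : option (sym Sigma 'I_nX)) (g : guard Sigma 'I_nX)
         (rho : valuation Sigma 'I_nX),
    List.In (q, al, g, q') (gva_trans A) /\
    (* rho = sigma (+) gamma, gamma defined exactly on the variables of al, g
       that are outside dom(sigma) *)
    (forall x v, sigma x = Some v -> rho x = Some v) /\
    (forall x, rho x <> None <->
       (sigma x <> None \/ List.In x (alpha_vars al ++ guard_vars g))) /\
    sat rho g /\
    (match al with
     | None => a = None
     | Some s => a <> None /\ a = sym_eval rho s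
     end) /\
    (forall x, sigma' x = if gva_kappa A x q' then None else rho x).

Definition opt_word (Sigma : Type) (a : option Sigma) : list Sigma :=
  match a with None => nil | Some b => b :: nil end.

Inductive gva_run (Sigma : Type) (nQ nX : nat) (A : GVA Sigma nQ nX) :
  valuation Sigma 'I_nX -> 'I_nQ -> list Sigma -> valuation Sigma 'I_nX -> 'I_nQ -> Prop :=
| gva_run_nil sigma q : gva_run A sigma q nil sigma q
| gva_run_step sigma q a sigma1 q1 w sigma2 q2 :
    gva_step A sigma q a sigma1 q1 -> gva_run A sigma1 q1 w sigma2 q2 ->
    gva_run A sigma q (opt_word a ++ w) sigma2 q2.

Definition gva_lang (Sigma : Type) (nQ nX : nat) (A : GVA Sigma nQ nX)
  (w : list Sigma) : Prop :=
  exists q0 sigma qf, gva_init A q0 /\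
    gva_run A (fun _ => None) q0 w sigma qf /\ gva_final A qf.

From mathcomp Require Import all_boot boolp.
From Stdlib Require Import List.

Set Implicit Arguments.
Unset Strict Implicit.
Unset Printing Implicit Defensive.

(* The subset construction determinises F; complementing its accepting states
   gives a deterministic automaton for the complement, which a GVA with a
   single variable simulates.  The only difficulty is the unboundedly many
   letters that occur on no transition of F: they all lead to the empty set of
   states, and one transition reads them at once by binding the variable to
   the letter under a guard that makes it differ from every label of F.  The
   variable is freed everywhere, so valuations are empty between steps. *)

Lemma InP (T : eqType) (x : T) (s : list T) : reflect (List.In x s) (x \in s).
Proof.
elim: s => [|y s IH] /=; first by constructor.
rewrite seq.in_cons; apply: (iffP orP) => [[/eqP ->|/IH]|[->|/IH]]; auto.
Qed.

Section SubsetConstruction.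
Variables (Sigma : Type) (n : nat) (F : NFA Sigma n).

Definition nfa_start : {set 'I_n} := [set q | nfa_init F q].

Definition nfa_post (S : {set 'I_n}) (a : Sigma) : {set 'I_n} :=
  [set q' | `[< exists2 q, q \in S & List.In (q, a, q') (nfa_trans F) >]].

Definition nfa_reach (S : {set 'I_n}) (w : list Sigma) : {set 'I_n} :=
  foldl nfa_post S w.

Lemma mem_nfa_reach w S q' :
  q' \in nfa_reach S w <-> exists2 q, q \in S & nfa_run F q w q'.
Proof.
elim: w S => [|a w IH] S /=.
  split=> [Sq'|[q Sq run_q]]; first by exists q' => //; constructor.
  by inversion run_q; subst.
rewrite IH; split=> [[p /[!inE] /asboolP[q Sq qap] run_p]|[q Sq run_q]].
  by exists q => //; apply: nfa_run_cons run_p.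
inversion run_q as [|? ? p ? ? qap run_p]; subst.
by exists p => //; rewrite inE; apply/asboolP; exists q.
Qed.

Lemma nfa_langE w :
  nfa_lang F w <-> exists2 q, q \in nfa_reach nfa_start w & nfa_final F q.
Proof.
split=> [[q0 [qf [init_q0 [run_q0 final_qf]]]]|[qf /mem_nfa_reach[q0]]].
  by exists qf => //; apply/mem_nfa_reach; exists q0; rewrite ?inE.
by rewrite inE => init_q0 run_q0 final_qf; exists q0, qf.
Qed.

Definition nfa_labels : list Sigma := [seq t.1.2 | t <- nfa_trans F].

Lemma nfa_post_notin_labels S a : ~ List.In a nfa_labels -> nfa_post S a = set0.
Proof.
move=> a_notin; apply/setP => q'; rewrite !inE.
apply/asboolP => -[q _ qaq']; apply: a_notin.
exact: (List.in_map (fun t => t.1.2) _ _ qaq').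
Qed.

End SubsetConstruction.

Section AvoidGuard.
Variables (Sigma X : Type) (x : X).

Fixpoint avoid_guard (l : list Sigma) : guard Sigma X :=
  if l is a :: l' then GAnd (GNeq (SVar _ x) (SLet _ a)) (avoid_guard l')
  else GTrue _ _.

Lemma sat_avoid_guard (rho : valuation Sigma X) b l :
  rho x = Some b -> sat rho (avoid_guard l) <-> ~ List.In b l.
Proof.
move=> rho_x; elim: l => [|a l IH] /=; first tauto.
rewrite IH rho_x; split=> [[[v [w /= [[<-] [[<-] neq_ba]]]] b_notin]|b_notin].
  by case=> [/esym|].
split; last by auto.
by exists b, a; split=> //; split=> // eq_ba; apply: b_notin; left.
Qed.

End AvoidGuard.

Section ComplementGVA.
Variables (Sigma : Type) (n : nat) (F : NFA Sigma n).

Notation state := {set 'I_n}.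
Notation nQ := #|{: state}|.

Definition compl_trans (S : state) :
    list ('I_nQ * option (sym Sigma 'I_1) * guard Sigma 'I_1 * 'I_nQ) :=
  (enum_rank S, Some (SVar _ ord0), avoid_guard ord0 (nfa_labels F),
     enum_rank (set0 : state))
  :: [seq (enum_rank S, Some (SLet _ a), GTrue _ _, enum_rank (nfa_post F S a))
     | a <- nfa_labels F].

Definition compl_gva : GVA Sigma nQ 1 := {|
  gva_init := fun i => i == enum_rank (nfa_start F);
  gva_final := fun i => [forall q in enum_val i, ~~ nfa_final F q];
  gva_trans := List.flat_map compl_trans (enum state);
  gva_kappa := fun _ _ => true |}.

Lemma compl_gva_step_inv sigma i a sigma' i' :
  gva_step compl_gva sigma i a sigma' i' ->
  exists b, a = Some b /\ i' = enum_rank (nfa_post F (enum_val i) b).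
Proof.
move=> [al [g [rho [/in_flat_map[S [_ tr_S]] [_ [_ [sat_g [read _]]]]]]]].
case: tr_S sat_g read => [[<- <- <- <-]|/in_map_iff[b [[<- <- <- <-] _]]];
  last by move=> _ [_ ->]; exists b; rewrite enum_rankK.
move=> sat_g [+ a_eq]; rewrite a_eq /=; case rho_x: (rho ord0) => [b|]; last by case.
move=> _; exists b; rewrite enum_rankK nfa_post_notin_labels //.
exact: (sat_avoid_guard _ rho_x).1 sat_g.
Qed.

Lemma compl_gva_step S b :
  gva_step compl_gva (fun _ => None) (enum_rank S) (Some b) (fun _ => None)
    (enum_rank (nfa_post F S b)).
Proof.
have tr_S t : List.In t (compl_trans S) -> List.In t (gva_trans compl_gva).
  by move=> ?; apply/in_flat_map; exists S; split=> //; apply/InP; rewrite mem_enum.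
have [b_label|b_fresh] := pselect (List.In b (nfa_labels F)).
  exists (Some (SLet _ b)), (GTrue _ _), (fun _ => None).
  split; first by apply/tr_S; right; apply/in_map_iff; exists b.
  by do !split=> //; case.
exists (Some (SVar _ ord0)), (avoid_guard ord0 (nfa_labels F)), (fun _ => Some b).
split; first by apply/tr_S; left; rewrite nfa_post_notin_labels.
do !split=> //; last exact/sat_avoid_guard.
by move=> _; right; left; rewrite (ord1 x).
Qed.

Lemma compl_gva_run_inv sigma i w sigma' i' :
  gva_run compl_gva sigma i w sigma' i' ->
  i' = enum_rank (nfa_reach F (enum_val i) w).
Proof.
elim=> [? ?|? ? ? ? ? ? ? ? /compl_gva_step_inv[b [-> ->]] _ ->] /=.
  by rewrite enum_valK.
by rewrite enum_rankK.
Qed.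

Lemma compl_gva_run S w :
  gva_run compl_gva (fun _ => None) (enum_rank S) w (fun _ => None)
    (enum_rank (nfa_reach F S w)).
Proof.
elim: w S => [|b w IH] S; first exact: gva_run_nil.
exact: gva_run_step (compl_gva_step S b) (IH _).
Qed.

Lemma compl_gva_langE w :
  gva_lang compl_gva w <->
  [forall q in nfa_reach F (nfa_start F) w, ~~ nfa_final F q].
Proof.
split=> [[i [sigma [j [/eqP -> [/compl_gva_run_inv ->]]]]]|reach_nonfinal].
  by rewrite /= !enum_rankK.
exists (enum_rank (nfa_start F)), (fun _ => None),
  (enum_rank (nfa_reach F (nfa_start F) w)).
by rewrite /= enum_rankK eqxx; split=> //; split=> //; apply: compl_gva_run.
Qed.

End ComplementGVA.

Theorem mainTheorem2 (Sigma : Type) (Hinf : infinite_alphabet Sigma)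
  (n : nat) (F : NFA Sigma n) :
  exists (nQ nX : nat) (A : GVA Sigma nQ nX),
    forall w : list Sigma, gva_lang A w <-> ~ nfa_lang F w.
Proof.
exists _, _, (compl_gva F) => w; rewrite compl_gva_langE nfa_langE.
split=> [/forall_inP reach_nonfinal [q /reach_nonfinal /negP]//|not_final].
by apply/forall_inP => q reach_q; apply/negP => final_q; apply: not_final; exists q.
Qed.
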